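(* For positive semidefinite matrices $A,B$ of the same size, $$\operatorname{tr}(A+B)^4-\operatorname{tr}(A^4+B^4)\ge(2^4-2)\operatorname{tr}(A^{1/2}BA^{1/2})^{2}=14\operatorname{tr}(AB)^2.$$ *)

From HB Require Import structures.
From mathcomp Require Import all_boot all_order all_algebra.
Set Implicit Arguments. Unset Strict Implicit. Unset Printing Implicit Defensive.
Import Order.TTheory GRing.Theory Num.Theory.
Local Open Scope ring_scope.

Definition psdmx (C : numClosedFieldType) (n : nat) (A : 'M[C]_n) : Prop :=
  (map_mx Num.conj A)^T = A /\
  forall v : 'cV[C]_n, 0 <= ((map_mx Num.conj v)^T *m A *m v) 0 0.

From HB Require Import structures.
From mathcomp Require Import all_boot all_order all_algebra.
From mathcomp Require Import ring.
Import Order.TTheory GRing.Theory Num.Theory.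
Local Open Scope ring_scope.

(* Expanding (A + B)^4 and using cyclicity of the trace, the
   defect  tr (A + B)^4 - tr (A^4 + B^4) - 14 tr (AB)^2  equals the sum of
   squares
        4 tr (A N B N) + 6 tr (K K^* ),    N := A - B,  K := AB - BA,
   an identity valid for matrices over any commutative ring (Section
   TraceIdentity).  For positive semidefinite A, B both terms are
   nonnegative (Section PsdTrace): N B N is again positive semidefinite
   (N being Hermitian), the trace of a product of two positive
   semidefinite matrices is nonnegative (by the spectral theorem applied to
   one factor), and tr (K K^* ) is a sum of squared moduli; moreover
   K^* = BA - AB because A and B are Hermitian. *)

Section TraceIdentity.
Context {R : comPzRingType} {n : nat}.
Implicit Types A B X Y Z W : 'M[R]_n.

Lemma mxtrace_rot4 X Y Z W : \tr (X * Y * Z * W) = \tr (Y * Z * W * X).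
Proof. by rewrite -!mulrA -mulmxE mxtrace_mulC mulmxE !mulrA. Qed.

Lemma mxtraceN X : \tr (- X) = - \tr X.
Proof. exact: raddfN. Qed.

Lemma quartic_trace_defect A B :
  \tr ((A + B) ^+ 4) - \tr (A ^+ 4 + B ^+ 4) - 14%:R * \tr ((A *m B) ^+ 2)
  = 4%:R * \tr (A *m ((A - B) *m B *m (A - B)))
    + 6%:R * \tr ((A *m B - B *m A) *m (B *m A - A *m B)).
Proof.
rewrite !mulmxE !exprS expr0 !mulr1.
rewrite !(mulrDl, mulrDr, mulrBl, mulrBr, mulrN, mulNr, opprK) !mulrA.
rewrite !(mxtraceD, mxtraceN).
(* Every word of length four is rotated to one of five representatives. *)
have e1 : \tr (A * A * B * A) = \tr (A * A * A * B) by rewrite 3!mxtrace_rot4.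
have e2 : \tr (A * B * A * A) = \tr (A * A * A * B) by rewrite 2!mxtrace_rot4.
have e3 : \tr (B * A * A * A) = \tr (A * A * A * B) by rewrite mxtrace_rot4.
have e4 : \tr (B * A * B * B) = \tr (A * B * B * B) by rewrite mxtrace_rot4.
have e5 : \tr (B * B * A * B) = \tr (A * B * B * B) by rewrite 2!mxtrace_rot4.
have e6 : \tr (B * B * B * A) = \tr (A * B * B * B) by rewrite 3!mxtrace_rot4.
have e7 : \tr (A * B * B * A) = \tr (A * A * B * B) by rewrite 3!mxtrace_rot4.
have e8 : \tr (B * B * A * A) = \tr (A * A * B * B) by rewrite 2!mxtrace_rot4.
have e9 : \tr (B * A * A * B) = \tr (A * A * B * B) by rewrite mxtrace_rot4.
have e10 : \tr (B * A * B * A) = \tr (A * B * A * B) by rewrite mxtrace_rot4.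
rewrite e1 e2 e3 e4 e5 e6 e7 e8 e9 e10; ring.
Qed.

End TraceIdentity.

Section PsdTrace.
Local Open Scope sesquilinear_scope.
Context {C : numClosedFieldType} {n : nat}.
Implicit Types P Q N : 'M[C]_n.

Lemma trmxC_mul m p q (X : 'M[C]_(m, p)) (Y : 'M[C]_(p, q)) :
  (X *m Y)^t* = Y^t* *m X^t*.
Proof. by rewrite trmx_mul map_mxM. Qed.

Lemma psd_adj {P} : psdmx P -> P^t* = P.
Proof. by case=> hP _; rewrite -map_trmx. Qed.

Lemma psd_hermsymmx {P} : psdmx P -> P \is hermsymmx.
Proof. by move=> /psd_adj hP; rewrite is_hermitianmxE expr0 scale1r hP. Qed.

Lemma psd_form_ge0 (v : 'rV[C]_n) {P} : psdmx P -> 0 <= (v *m P *m v^t*) 0 0.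
Proof. by case=> _ /(_ (v^t*)); rewrite map_trmx trmxCK. Qed.

Lemma psd_congr_diag_ge0 {m} (U : 'M[C]_(m, n)) i {P} :
  psdmx P -> 0 <= (U *m P *m U^t*) i i.
Proof.
move=> /(psd_form_ge0 (row i U)); congr (0 <= _).
rewrite -!row_mul !mxE; apply: eq_bigr => k _.
by rewrite !mxE.
Qed.

(* The trace of a product of two positive semidefinite matrices is
   nonnegative: diagonalize P = U^* D U unitarily, so that
   tr (P Q) = sum_i D_i (U Q U^* )_ii, where both D_i = (U P U^* )_ii and
   (U Q U^* )_ii are nonnegative. *)
Lemma mxtrace_psd_mul_ge0 P Q : psdmx P -> psdmx Q -> 0 <= \tr (P *m Q).
Proof.
move=> hP hQ.
have /hermitian_normalmx /orthomx_spectralP P_diag := psd_hermsymmx hP.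
set U := spectralmx P in P_diag; set d := spectral_diag P in P_diag.
have U_unitary : U \is unitarymx := spectral_unitarymx P.
rewrite invmx_unitary // in P_diag.
have d_diag : diag_mx d = U *m P *m U^t*.
  by rewrite P_diag !mulmxA mulmxtVK // (unitarymxP U_unitary) mul1mx.
have -> : \tr (P *m Q) = \tr (diag_mx d *m (U *m Q *m U^t*)).
  by rewrite P_diag -!mulmxA mxtrace_mulC -!mulmxA mxtrace_mulC !mulmxA.
rewrite /mxtrace; apply: sumr_ge0 => i _.
rewrite mul_diag_mx mxE; apply: mulr_ge0; last exact: psd_congr_diag_ge0.
by have := psd_congr_diag_ge0 U i hP; rewrite -d_diag mxE eqxx mulr1n.
Qed.

Lemma psd_congr N P : psdmx P -> psdmx (N^t* *m P *m N).
Proof.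
move=> hP; split.
  by rewrite map_trmx !trmxC_mul trmxCK (psd_adj hP) mulmxA.
move=> v; have [_ /(_ (N *m v))] := hP.
by rewrite map_trmx !trmxC_mul -map_trmx !mulmxA.
Qed.

Lemma psd_sub_adj {P Q} : psdmx P -> psdmx Q -> (P - Q)^t* = P - Q.
Proof. by move=> hP hQ; rewrite linearB map_mxB /= (psd_adj hP) (psd_adj hQ). Qed.

Lemma psd_commutator_adj {P Q} : psdmx P -> psdmx Q ->
  (P *m Q - Q *m P)^t* = Q *m P - P *m Q.
Proof.
move=> hP hQ; rewrite linearB map_mxB /= !trmxC_mul.
by rewrite (psd_adj hP) (psd_adj hQ).
Qed.

(* tr (K K^* ) is the sum of the squared moduli of the entries of K. *)
Lemma mxtrace_mul_adj_ge0 m p (K : 'M[C]_(m, p)) : 0 <= \tr (K *m K^t*).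
Proof.
rewrite /mxtrace; apply: sumr_ge0 => i _; rewrite mxE.
by apply: sumr_ge0 => j _; rewrite !mxE mul_conjC_ge0.
Qed.

End PsdTrace.

Theorem mainTheorem13 (C : numClosedFieldType) (n : nat) (A B : 'M[C]_n)
  (hA : psdmx A) (hB : psdmx B) :
  14%:R * \tr ((A *m B) ^+ 2)
    <= \tr ((A + B) ^+ 4) - \tr (A ^+ 4 + B ^+ 4).
Proof.
rewrite -subr_ge0 quartic_trace_defect.
apply: addr_ge0; apply: mulr_ge0; rewrite ?ler0n //.
- (* tr (A N B N) >= 0, as N B N = N^* B N is positive semidefinite. *)
  apply: mxtrace_psd_mul_ge0 => //.
  by rewrite -{1}(psd_sub_adj hA hB); apply: psd_congr.
- (* tr (K (BA - AB)) = tr (K K^* ) >= 0 for K = AB - BA. *)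
  by rewrite -(psd_commutator_adj hA hB); apply: mxtrace_mul_adj_ge0.
Qed.
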